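(* Let $M\in\mathbb{R}^{n\times n}$ be symmetric positive definite, let $\delta_i,\delta_{i-1}>0$, let $\theta_{i-1},\theta_{i-2}\in\mathbb{R}^n$ and a control value $u$ be fixed, and let $\bar P(\cdot,u):\mathbb{R}^n\to\mathbb{R}$ be $L$-curvature bounded for some $L>0$. Define $$\bar E_i(\theta_i)=\frac{1}{2\delta_i^2}\Big\|\theta_i-\big(1+\tfrac{\delta_i}{\delta_{i-1}}\big)\theta_{i-1}+\tfrac{\delta_i}{\delta_{i-1}}\theta_{i-2}\Big\|_M^2+\bar P(\theta_i,u).$$ If $\delta_i<\sqrt{\sigma_{\min}(M)/L}$, then $\bar E_i$ is strongly convex in $\theta_i$ and its minimizer over $\theta_i\in\mathbb{R}^n$ is unique.
   Context: $\|x\|_M^2=x^TMx$; $\sigma_{\min}(M)$ denotes the smallest singular value of $M$. A function $\phi:\mathbb{R}^n\to\mathbb{R}$ is $L$-weakly convex if $\phi(x)+\frac{L}{2}\|x\|^2$ is convex; it is $L$-gradient continuous if it is differentiable and $\|\nabla\phi(x)-\nabla\phi(x')\|\le L\|x-x'\|$ for all $x,x'$; it is $L$-curvature bounded if both properties hold. *)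

From HB Require Import structures.
From mathcomp Require Import all_boot all_order all_algebra.
From mathcomp Require Import all_classical all_reals all_analysis.
Set Implicit Arguments. Unset Strict Implicit. Unset Printing Implicit Defensive.
Import Order.TTheory GRing.Theory Num.Theory.
Import numFieldNormedType.Exports.
Local Open Scope classical_set_scope.
Local Open Scope ring_scope.

Section Defs.
Variables (R : realType) (n : nat).

Definition dotv (x y : 'cV[R]_n) : R := \sum_(i < n) x i 0 * y i 0.
Definition enorm (x : 'cV[R]_n) : R := Num.sqrt (dotv x x).

Definition mnorm2 (M : 'M[R]_n) (x : 'cV[R]_n) : R := (x^T *m M *m x) 0 0.

Definition sym_pos_def (M : 'M[R]_n) : Prop :=
  M^T = M /\ forall x : 'cV[R]_n, x != 0 -> 0 < mnorm2 M x.

Definition sigma_min (M : 'M[R]_n) : R :=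
  inf [set enorm (M *m x) | x in [set x : 'cV[R]_n | enorm x = 1]].

Definition convex_fun (f : 'cV[R]_n -> R) : Prop :=
  forall (x y : 'cV[R]_n) (t : R), 0 <= t <= 1 ->
    f ((1 - t) *: x + t *: y) <= (1 - t) * f x + t * f y.

Definition weakly_convex (L : R) (f : 'cV[R]_n -> R) : Prop :=
  convex_fun (fun x => f x + L / 2 * enorm x ^+ 2).

Definition strongly_convex (f : 'cV[R]_n -> R) : Prop :=
  exists mu : R, 0 < mu /\ convex_fun (fun x => f x - mu / 2 * enorm x ^+ 2).

Definition gradient (f : 'cV[R]_n -> R) (x : 'cV[R]_n) : 'cV[R]_n :=
  \col_i ('d f x (delta_mx i 0)).

Definition gradient_continuous (L : R) (f : 'cV[R]_n -> R) : Prop :=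
  (forall x, differentiable f x) /\
  forall x y : 'cV[R]_n, enorm (gradient f x - gradient f y) <= L * enorm (x - y).

Definition curvature_bounded (L : R) (f : 'cV[R]_n -> R) : Prop :=
  weakly_convex L f /\ gradient_continuous L f.

End Defs.

From HB Require Import structures.
From mathcomp Require Import all_boot all_order all_algebra.
From mathcomp Require Import all_classical all_reals all_analysis.
Import Order.TTheory GRing.Theory Num.Theory.
Import numFieldNormedType.Exports.
From mathcomp Require Import ring lra.
Set Implicit Arguments. Unset Strict Implicit. Unset Printing Implicit Defensive.
Local Open Scope ring_scope.
Local Open Scope classical_set_scope.

(* A minimiser x of the quadratic form on the unit sphere is an eigenvector of
   M for the eigenvalue m = x^T M x (first variation), so sigma_min M <= |M x| = m
   and sigma_min M |v|^2 <= v^T M v for all v.  Hence the quadratic part minus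
   sigma_min M / (2 delta^2) |x|^2 is convex, and adding the convex function
   P + L/2 |.|^2 shows that Ebar - mu/2 |.|^2 is convex for
   mu = sigma_min M / delta^2 - L > 0.  A continuous strongly convex function
   grows quadratically, so it attains its minimum on a large ball, and strong
   convexity at the midpoint of two minimisers forces them to coincide. *)

Section BilinearForm.
Variables (R : comPzRingType) (n : nat).
Implicit Types (M : 'M[R]_n) (x y z : 'cV[R]_n).

Definition mxform M x y : R := (x^T *m M *m y) 0 0.

Lemma mxformDl M x y z : mxform M (x + y) z = mxform M x z + mxform M y z.
Proof. by rewrite /mxform linearD /= !mulmxDl mxE. Qed.

Lemma mxformDr M x y z : mxform M z (x + y) = mxform M z x + mxform M z y.
Proof. by rewrite /mxform mulmxDr mxE. Qed.

Lemma mxformZl M k x y : mxform M (k *: x) y = k * mxform M x y.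
Proof. by rewrite /mxform linearZ /= -!scalemxAl mxE. Qed.

Lemma mxformZr M k x y : mxform M x (k *: y) = k * mxform M x y.
Proof. by rewrite /mxform -scalemxAr mxE. Qed.

Lemma mxformZ M k x y : mxform (k *: M) x y = k * mxform M x y.
Proof. by rewrite /mxform -scalemxAr -scalemxAl mxE. Qed.

Lemma mxformNl M x y : mxform M (- x) y = - mxform M x y.
Proof. by rewrite -scaleN1r mxformZl mulN1r. Qed.

Lemma mxformNr M x y : mxform M x (- y) = - mxform M x y.
Proof. by rewrite -scaleN1r mxformZr mulN1r. Qed.

Lemma mxform0l M y : mxform M 0 y = 0.
Proof. by rewrite /mxform trmx0 !mul0mx mxE. Qed.

Lemma mxformC M x y : M^T = M -> mxform M x y = mxform M y x.
Proof.
move=> MT; rewrite /mxform -[in LHS](trmxK (x^T *m M *m y)) mxE.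
by rewrite !trmx_mul trmxK MT mulmxA.
Qed.

Lemma mxform_sym_mull M x y : M^T = M -> mxform M x y = mxform 1%:M (M *m x) y.
Proof. by move=> MT; rewrite /mxform mulmx1 trmx_mul MT. Qed.

Lemma mxform_convex_comb M x y t : M^T = M ->
  mxform M ((1 - t) *: x + t *: y) ((1 - t) *: x + t *: y) =
  (1 - t) * mxform M x x + t * mxform M y y - t * (1 - t) * mxform M (x - y) (x - y).
Proof.
move=> MT; rewrite !(mxformDl, mxformDr, mxformZl, mxformZr, mxformNl, mxformNr).
by rewrite (mxformC x y MT); ring.
Qed.

End BilinearForm.

Section EuclideanNorm.
Variables (R : realType) (n : nat).
Implicit Types (x y : 'cV[R]_n).

Lemma dotvE x y : dotv x y = mxform 1%:M x y.
Proof. by rewrite /mxform mulmx1 mxE; apply: eq_bigr => i _; rewrite mxE. Qed.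

Lemma dotv_ge0 x : 0 <= dotv x x.
Proof. by apply: sumr_ge0 => i _; rewrite -expr2 sqr_ge0. Qed.

Lemma dotv_eq0 x : dotv x x = 0 -> x = 0.
Proof.
move=> /(psumr_eq0P (fun i _ => sqr_ge0 (x i 0))) x0.
apply/matrixP => i j; rewrite ord1 mxE; apply/eqP.
by have /eqP := x0 i isT; rewrite mulf_eq0 orbb.
Qed.

Lemma dotvZ k x : dotv (k *: x) (k *: x) = k ^+ 2 * dotv x x.
Proof. by rewrite !dotvE mxformZl mxformZr mulrA expr2. Qed.

Lemma enorm_ge0 x : 0 <= enorm x.
Proof. exact: sqrtr_ge0. Qed.

Lemma sqr_enorm x : enorm x ^+ 2 = dotv x x.
Proof. by rewrite sqr_sqrtr // dotv_ge0. Qed.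

Lemma enorm0 : enorm (0 : 'cV[R]_n) = 0.
Proof. by rewrite /enorm dotvE mxform0l sqrtr0. Qed.

Lemma enorm_gt0 x : x != 0 -> 0 < enorm x.
Proof.
move=> x0; rewrite lt_neqAle enorm_ge0 andbT eq_sym; apply: contra x0 => /eqP ex0.
by apply/eqP/dotv_eq0; rewrite -sqr_enorm ex0 expr0n.
Qed.

Lemma enormZ k x : enorm (k *: x) = `|k| * enorm x.
Proof. by rewrite /enorm dotvZ sqrtrM ?sqr_ge0 // sqrtr_sqr. Qed.

Lemma enorm_normalize x : x != 0 -> enorm ((enorm x)^-1 *: x) = 1.
Proof.
move=> x0; have ex0 := enorm_gt0 x0.
by rewrite enormZ gtr0_norm ?invr_gt0 // mulVf // gt_eqF.
Qed.

Lemma coord_le_enorm x i : `|x i 0| <= enorm x.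
Proof.
rewrite -sqrtr_sqr; apply: ler_wsqrtr.
rewrite /dotv (bigD1 i) //= -expr2 lerDl.
by apply: sumr_ge0 => k _; rewrite -expr2 sqr_ge0.
Qed.

Lemma sqr_enorm_convex_comb x y t :
  enorm ((1 - t) *: x + t *: y) ^+ 2 =
  (1 - t) * enorm x ^+ 2 + t * enorm y ^+ 2 - t * (1 - t) * enorm (x - y) ^+ 2.
Proof. by rewrite !sqr_enorm !dotvE mxform_convex_comb // tr_scalar_mx. Qed.

End EuclideanNorm.

Section Topology.
Variables (R : realType) (n : nat).

Lemma continuous_mxform (M : 'M[R]_n) : continuous (fun x : 'cV[R]_n => mxform M x x).
Proof.
have mxformE x : mxform M x x = \sum_j \sum_i x i 0 * M i j * x j 0.
  rewrite /mxform mxE; apply: eq_bigr => j _; rewrite mxE big_distrl /=.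
  by apply: eq_bigr => i _; rewrite mxE.
under eq_fun do rewrite mxformE.
apply: continuous_big => [|j _]; first exact: add_continuous.
apply: continuous_big => [|i _]; first exact: add_continuous.
move=> x; apply: (@continuousM R _ (fun y : 'cV[R]_n => y i 0 * M i j));
  last exact: coord_continuous.
by apply: continuousM; [exact: coord_continuous | exact: cst_continuous].
Qed.

Lemma continuous_mxform_shift (M : 'M[R]_n) (c : 'cV[R]_n) :
  continuous (fun x : 'cV[R]_n => mxform M (x - c) (x - c)).
Proof.
have shift_cont : continuous (fun x : 'cV[R]_n => x - c).
  by move=> x; apply: (@continuousB _ _ _ (fun y => y) (fun=> c));
    [exact: cvg_id | exact: cst_continuous].
by move=> x; exact: (continuous_comp (shift_cont x) (@continuous_mxform M (x - c))).
Qed.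

Lemma continuous_enorm : continuous (@enorm R n).
Proof.
have dotv_cont : continuous (fun y : 'cV[R]_n => dotv y y).
  by under eq_fun do rewrite dotvE; exact: continuous_mxform.
by move=> x; exact: (continuous_comp (dotv_cont x) (@sqrt_continuous R _)).
Qed.

Lemma continuous_trmx : continuous (fun v : 'rV[R]_n => v^T).
Proof.
move=> v A /= /(nbhs_ballP (v^T)) [e e0 eA].
apply/nbhs_ballP; exists e => //= w [_ vw]; apply: eA; split => // i j.
by rewrite !mxE; exact: vw.
Qed.

Lemma compact_enorm_le r : compact [set x : 'cV[R]_n | enorm x <= r].
Proof.
(* Heine-Borel is only available for row vectors: transport along transposition. *)
set B := [set x : 'cV[R]_n | enorm x <= r].
have -> : B = (fun v : 'rV[R]_n => v^T) @` ((fun v : 'rV[R]_n => v^T) @^-1` B).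
  by apply/seteqP; split => [x Bx|_ [v Bv <-] //]; exists x^T; rewrite /= ?trmxK.
apply: continuous_compact.
  by apply: continuous_subspaceT => v; exact: continuous_trmx.
apply: bounded_closed_compact; last first.
  apply: preimage_closed => [v _|]; first exact: continuous_trmx.
  apply: (@preimage_closed _ _ (@enorm R n) [set y | y <= r]) => [x _|].
    exact: continuous_enorm.
  exact: closed_le.
exists r; split; first by rewrite num_real.
move=> b rb v Bv; apply: le_trans (ltW rb).
change (mx_norm v <= r); rewrite mx_normrE; apply: bigmax_le => [|[a j] _ /=].
  exact: le_trans (enorm_ge0 _) Bv.
by rewrite ord1; apply: le_trans Bv; have := coord_le_enorm v^T j; rewrite mxE.
Qed.

Lemma compact_unit_sphere : compact [set x : 'cV[R]_n | enorm x = 1].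
Proof.
apply: (@subclosed_compact _ _ [set x : 'cV[R]_n | enorm x <= 1]).
- apply: (@preimage_closed _ _ (@enorm R n) [set y | y = 1]) => [x _|].
    exact: continuous_enorm.
  exact: closed_eq.
- exact: compact_enorm_le.
- by move=> x /= ->.
Qed.

End Topology.

Lemma quadratic_ge0_linear_coef_eq0 (R : realFieldType) (a b : R) :
  (forall t, 0 <= a * t ^+ 2 + b * t) -> b = 0.
Proof.
move=> ge0; pose d := `|a| + 1.
have d_gt0 : 0 < d by rewrite ltr_pwDr // normr_ge0.
pose u := b / (2 * d).
have bE : b = 2 * d * u by rewrite /u; field; rewrite gt_eqF.
have ge0u := ge0 (- u); rewrite bE in ge0u.
have a_le : a <= `|a| := ler_norm a.
suff u0 : u = 0 by rewrite bE u0 mulr0.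
apply/eqP; rewrite -sqrf_eq0 eq_le sqr_ge0 andbT.
rewrite /d in ge0u d_gt0; nra.
Qed.

Section Rayleigh.
Variables (R : realType) (n : nat).
Implicit Types (M : 'M[R]_n) (x y : 'cV[R]_n).

Lemma mxform_ge_of_unit_sphere M m :
  (forall y, enorm y = 1 -> m <= mxform M y y) ->
  forall y, m * dotv y y <= mxform M y y.
Proof.
move=> m_le y; have [->|y0] := eqVneq y 0; first by rewrite dotvE !mxform0l mulr0.
have dy_gt0 : 0 < dotv y y by rewrite -sqr_enorm exprn_gt0 // enorm_gt0.
have := m_le _ (enorm_normalize y0).
by rewrite mxformZl mxformZr mulrA -expr2 exprVn sqr_enorm ler_pdivlMl // mulrC.
Qed.

Lemma mxform_min_eigenvector M m x : M^T = M ->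
  (forall y, m * dotv y y <= mxform M y y) -> mxform M x x = m * dotv x x ->
  M *m x = m *: x.
Proof.
move=> MT m_le x_eq; pose w := M *m x - m *: x; have wE : w = M *m x - m *: x by [].
have xw : mxform M x w - m * dotv x w = dotv w w.
  by rewrite (mxform_sym_mull _ _ MT) !dotvE -mxformZl -mxformNl -mxformDl.
rewrite !dotvE in x_eq xw; clearbody w.
(* t |-> q(x + t w) - m |x + t w|^2 is nonnegative and vanishes at t = 0. *)
have first_variation : 2 * (mxform M x w - m * mxform 1%:M x w) = 0.
  apply: (@quadratic_ge0_linear_coef_eq0 _ (mxform M w w - m * mxform 1%:M w w)) => t.
  have := m_le (x + t *: w).
  rewrite -subr_ge0 dotvE !(mxformDl, mxformDr, mxformZl, mxformZr).
  rewrite (mxformC w x MT) (mxformC w x (tr_scalar_mx n 1)) x_eq => ge0.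
  by apply: le_trans ge0 _; rewrite le_eqVlt; apply/orP; left; apply/eqP; ring.
have w0 : w = 0.
  apply: dotv_eq0; move: first_variation; rewrite xw -dotvE => /eqP.
  by rewrite mulf_eq0 pnatr_eq0 => /eqP.
by apply/eqP; rewrite -subr_eq0 -wE w0.
Qed.

Lemma sigma_min_mnorm2_le M v : sym_pos_def M -> sigma_min M * dotv v v <= mnorm2 M v.
Proof.
move=> [MT M_pd]; have [->|v0] := eqVneq v 0.
  by rewrite dotvE -[mnorm2 _ _]/(mxform M 0 0) !mxform0l mulr0.
set S := [set x : 'cV[R]_n | enorm x = 1].
have [x /[!inE] x1 x_min] :
    exists2 x, x \in S & forall y, y \in S -> mxform M x x <= mxform M y y.
  apply: compact_EVT_min; first by exists ((enorm v)^-1 *: v); exact: enorm_normalize.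
    exact: compact_unit_sphere.
  by apply: continuous_subspaceT => y; exact: continuous_mxform.
have {}x1 : enorm x = 1 := x1.
set m := mxform M x x.
have m_le : forall y, m * dotv y y <= mxform M y y.
  by apply: mxform_ge_of_unit_sphere => y y1; apply: x_min; rewrite inE.
have dx1 : dotv x x = 1 by rewrite -sqr_enorm x1 expr1n.
have Mx : M *m x = m *: x by apply: mxform_min_eigenvector => //; rewrite dx1 mulr1.
have m_gt0 : 0 < m.
  by apply: M_pd; apply: contra_eq_neq x1 => ->; rewrite enorm0 eq_sym oner_neq0.
have sigma_le_m : sigma_min M <= m.
  have <- : enorm (M *m x) = m by rewrite Mx enormZ gtr0_norm // x1 mulr1.
  by apply: ge_inf; [exists 0 => _ [y _ <-]; exact: enorm_ge0 | exists x].
by apply: le_trans (m_le v); rewrite ler_wpM2r // dotv_ge0.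
Qed.

End Rayleigh.

Section StrongConvexity.
Variables (R : realType) (n : nat).
Implicit Types (f g h : 'cV[R]_n -> R) (x y : 'cV[R]_n).

Lemma convex_funD f g : convex_fun f -> convex_fun g -> convex_fun (fun x => f x + g x).
Proof. by move=> cf cg x y t t01; have := cf x y t t01; have := cg x y t t01; lra. Qed.

Lemma convex_mxform_shift_sub_sqr_enorm M k a c : M^T = M ->
  (forall v, a * dotv v v <= k * mxform M v v) ->
  convex_fun (fun x => k * mxform M (x - c) (x - c) - a * enorm x ^+ 2).
Proof.
move=> MT a_le x y t /andP[t0 t1].
have shift : (1 - t) *: x + t *: y - c = (1 - t) *: (x - c) + t *: (y - c).
  by apply/matrixP => i j; rewrite !mxE; ring.
have diff : x - c - (y - c) = x - y by apply/matrixP => i j; rewrite !mxE; ring.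
rewrite shift mxform_convex_comb // diff sqr_enorm_convex_comb !sqr_enorm.
have t_1t_ge0 : 0 <= t * (1 - t) by rewrite mulr_ge0 // subr_ge0.
have gap_ge0 : 0 <= k * mxform M (x - y) (x - y) - a * dotv (x - y) (x - y).
  by rewrite subr_ge0 a_le.
have := mulr_ge0 t_1t_ge0 gap_ge0; lra.
Qed.

Lemma continuous_sub_sqr_enorm f mu :
  continuous f -> continuous (fun x => f x - mu * enorm x ^+ 2).
Proof.
move=> f_cont; have sqr_cont : continuous (fun x : 'cV[R]_n => enorm x ^+ 2).
  by move=> x; apply: (@continuousM R _ (@enorm R n) (@enorm R n));
    exact: continuous_enorm.
have scaled_cont : continuous (fun x : 'cV[R]_n => mu * enorm x ^+ 2).
  move=> x; apply: (@continuousM R _ (fun=> mu) (fun y => enorm y ^+ 2)).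
    exact: cst_continuous.
  exact: sqr_cont.
by move=> x; apply: (@continuousB R R^o _ f); [exact: f_cont | exact: scaled_cont].
Qed.

Lemma convex_linear_lower_bound h : continuous h -> convex_fun h ->
  exists2 K, 0 <= K & forall x, 1 <= enorm x -> h 0 - K * enorm x <= h x.
Proof.
(* Compare h x with h (x / |x|) on the segment [0, x], using the minimum of h
   on the unit ball. *)
move=> h_cont h_cvx.
have [x1 /[!inE] x1_le1 x1_min] : exists2 x1, x1 \in [set x | enorm x <= 1] &
    forall y, y \in [set x | enorm x <= 1] -> h x1 <= h y.
  apply: compact_EVT_min; first by exists 0; rewrite /= enorm0.
    exact: compact_enorm_le.
  exact: continuous_subspaceT.
exists (h 0 - h x1); first by rewrite subr_ge0 x1_min // inE /= enorm0.
move=> x x_ge1; have x_gt0 : 0 < enorm x := lt_le_trans ltr01 x_ge1.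
set t := (enorm x)^-1.
have t01 : 0 <= t <= 1 by rewrite invr_ge0 ltW //= invr_le1 // unitfE gt_eqF.
have := h_cvx 0 x t t01; rewrite scaler0 add0r.
have tx_le1 : enorm (t *: x) <= 1.
  by rewrite enormZ ger0_norm ?(andP t01).1 // mulVf // gt_eqF.
move=> /(le_trans (x1_min _ (mem_set tx_le1))) /(ler_wpM2l (ltW x_gt0)).
have xt : enorm x * t = 1 by rewrite /t mulfV // gt_eqF.
rewrite mulrDr !mulrA mulrBr xt mulr1 !mul1r.
lra.
Qed.

Lemma strongly_convex_coercive f : continuous f -> strongly_convex f ->
  exists2 r, 0 <= r & forall y, r < enorm y -> f 0 <= f y.
Proof.
move=> f_cont [mu [mu_gt0 h_cvx]].
(* Beyond radius 1 + 2K/mu the growth mu/2 |y|^2 beats the linear loss K |y|. *)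
have h_cont := @continuous_sub_sqr_enorm f (mu / 2) f_cont.
have [K K_ge0 h_ge] := convex_linear_lower_bound h_cont h_cvx.
have r_ge1 : 1 <= 1 + 2 * K / mu.
  by rewrite lerDl divr_ge0 ?mulr_ge0 // ltW.
exists (1 + 2 * K / mu) => [|y y_gt]; first exact: le_trans ler01 r_ge1.
have y_ge1 : 1 <= enorm y := le_trans r_ge1 (ltW y_gt).
have := h_ge y y_ge1; rewrite enorm0 expr0n /= mulr0 subr0 expr2 => h_y.
have mu_y : mu * (1 + 2 * K / mu) < mu * enorm y by rewrite ltr_pM2l.
rewrite mulrDr mulr1 mulrCA mulfV ?gt_eqF // mulr1 in mu_y.
have gap : 0 <= enorm y * (mu * enorm y - 2 * K).
  by rewrite mulr_ge0 ?enorm_ge0 // subr_ge0; lra.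
lra.
Qed.

Lemma continuous_coercive_exists_min f r : continuous f -> 0 <= r ->
  (forall y, r < enorm y -> f 0 <= f y) -> exists x, forall y, f x <= f y.
Proof.
move=> f_cont r_ge0 f_far.
have B0 : enorm (0 : 'cV[R]_n) <= r by rewrite enorm0.
have [x /[!inE] _ x_min] : exists2 x, x \in [set x | enorm x <= r] &
    forall y, y \in [set x | enorm x <= r] -> f x <= f y.
  apply: compact_EVT_min; [by exists 0 | exact: compact_enorm_le |].
  exact: continuous_subspaceT.
exists x => y; have [y_le|y_gt] := leP (enorm y) r; first by rewrite x_min ?inE.
exact: le_trans (x_min 0 (mem_set B0)) (f_far y y_gt).
Qed.

Lemma strongly_convex_min_unique f x1 x2 : strongly_convex f ->
  (forall y, f x1 <= f y) -> (forall y, f x2 <= f y) -> x1 = x2.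
Proof.
move=> [mu [mu_gt0 h_cvx]] x1_min x2_min.
have half01 : 0 <= (2^-1 : R) <= 1 by apply/andP; split; lra.
have := h_cvx x1 x2 _ half01; rewrite sqr_enorm_convex_comb.
set mid := _ *: x1 + _ *: x2 => cvx_mid.
have := x1_min mid; have := x2_min mid; have := dotv_ge0 (x1 - x2).
rewrite -sqr_enorm => d_ge0 le1 le2.
have : enorm (x1 - x2) ^+ 2 = 0 by nra.
by rewrite sqr_enorm => /dotv_eq0/eqP; rewrite subr_eq0 => /eqP.
Qed.

Lemma strongly_convex_exists_unique_min f : continuous f -> strongly_convex f ->
  exists! x, forall y, f x <= f y.
Proof.
move=> f_cont f_sc; have [r r_ge0 f_far] := strongly_convex_coercive f_cont f_sc.
have [x x_min] := continuous_coercive_exists_min f_cont r_ge0 f_far.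
by exists x; split=> // x' x'_min; exact: strongly_convex_min_unique f_sc x_min x'_min.
Qed.

Lemma strongly_convex_mxform_add_weakly_convex M P k L c :
  sym_pos_def M -> 0 < k -> L < 2 * k * sigma_min M -> weakly_convex L P ->
  strongly_convex (fun x => k * mxform M (x - c) (x - c) + P x).
Proof.
move=> M_spd k_gt0 L_lt P_wcvx; set s := sigma_min M.
exists (2 * k * s - L); split; first by rewrite subr_gt0.
have -> : (fun x => k * mxform M (x - c) (x - c) + P x
                    - (2 * k * s - L) / 2 * enorm x ^+ 2) =
    fun x => (k * mxform M (x - c) (x - c) - k * s * enorm x ^+ 2) +
             (P x + L / 2 * enorm x ^+ 2).
  by apply/funext => x; lra.
apply: convex_funD => //; apply: convex_mxform_shift_sub_sqr_enorm; first by case: M_spd.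
by move=> v; rewrite -mulrA ler_pM2l //; exact: sigma_min_mnorm2_le.
Qed.

End StrongConvexity.

Theorem lemma2 (R : realType) (n : nat) (U : Type) (M : 'M[R]_n)
  (delta_i delta_im1 : R) (theta_im1 theta_im2 : 'cV[R]_n) (u : U)
  (Pbar : 'cV[R]_n -> U -> R) (L : R) :
  sym_pos_def M -> 0 < delta_i -> 0 < delta_im1 -> 0 < L ->
  curvature_bounded L (fun th => Pbar th u) ->
  delta_i < Num.sqrt (sigma_min M / L) ->
  let Ebar := fun th : 'cV[R]_n =>
    1 / (2 * delta_i ^+ 2) *
      mnorm2 M (th - (1 + delta_i / delta_im1) *: theta_im1
                   + (delta_i / delta_im1) *: theta_im2)
    + Pbar th u in
  strongly_convex Ebar /\
  exists! th : 'cV[R]_n, forall th' : 'cV[R]_n, Ebar th <= Ebar th'.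
Proof.
move=> M_spd delta_gt0 _ L_gt0 [P_wcvx [P_diff _]] delta_lt Ebar.
set k := 1 / (2 * delta_i ^+ 2).
set c := (1 + delta_i / delta_im1) *: theta_im1 - (delta_i / delta_im1) *: theta_im2.
have EbarE : Ebar = fun x => k * mxform M (x - c) (x - c) + Pbar x u.
  apply/funext => x; congr (_ * mxform _ _ _ + _); apply/matrixP => i j;
  by rewrite !mxE; ring.
have k_gt0 : 0 < k by rewrite divr_gt0 // mulr_gt0 // exprn_gt0.
have L_lt : L < 2 * k * sigma_min M.
  set s := sigma_min M.
  have sL_gt0 : 0 < s / L by rewrite -sqrtr_gt0 (lt_trans delta_gt0).
  have : delta_i ^+ 2 < s / L by rewrite -(sqr_sqrtr (ltW sL_gt0)) ltrXn2r // ltW.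
  have -> : 2 * k * s = s / delta_i ^+ 2 by rewrite /k; field; rewrite gt_eqF.
  by rewrite !ltr_pdivlMr ?exprn_gt0 // mulrC.
have Ebar_sc : strongly_convex Ebar.
  rewrite EbarE.
  exact: strongly_convex_mxform_add_weakly_convex c M_spd k_gt0 L_lt P_wcvx.
have Ebar_cont : continuous Ebar.
  have q_cont : continuous (fun y : 'cV[R]_n => k * mxform M (y - c) (y - c)).
    by under eq_fun do rewrite -mxformZ; exact: continuous_mxform_shift.
  rewrite EbarE => x.
  exact: (continuousD (q_cont x) (differentiable_continuous (P_diff x))).
by split=> //; exact: strongly_convex_exists_unique_min.
Qed.
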